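(* Let $G$ be a connected block graph on $n$ vertices with set of cut vertices $V_c(G)$ and $k$ an integer with $2\le k\le n$. Then $$SW_k(G)=\sum_{v\in V_c(G)} B_k(v) + (k-1)\binom{n}{k}.$$
   Context: A block graph is a graph in which every block (maximal connected induced subgraph without cut vertices) is a clique. For connected $G$ and $S\subseteq V(G)$, the Steiner distance $d(S)$ is the minimum number of edges of a connected subgraph whose vertex set contains $S$; such a minimum subgraph is a tree, called a Steiner tree for $S$; vertices of $S$ are its terminal vertices and the other vertices its inner vertices. $SW_k(G)=\sum_{S\subseteq V(G),|S|=k} d(S)$. The $k$-Steiner betweenness centrality of $v$ is $$B_k(v)=\sum_{A\subseteq V(G)\setminus\{v\},\ |A|=k}\frac{\sigma_A(v)}{\sigma_A},$$ where $\sigma_A$ is the number of Steiner trees for $A$ and $\sigma_A(v)$ is the number of those containing $v$ as an inner vertex. *)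

From mathcomp Require Import all_boot all_order all_algebra.
Set Implicit Arguments. Unset Strict Implicit. Unset Printing Implicit Defensive.

Section BlockGraphs.
Variables (T : finType) (e : rel T).

Definition simple_graph : Prop := symmetric e /\ irreflexive e.

Definition graph_connected : Prop := forall x y : T, connect e x y.

(* the subgraph induced by S is connected (empty set counts as connected) *)
Definition conn_in (S : {set T}) : bool :=
  [forall x in S, forall y in S,
     connect [rel a b | e a b && (a \in S) && (b \in S)] x y].

Definition no_cut_in (S : {set T}) : bool :=
  [forall v in S, conn_in (S :\ v)].

Definition is_block (B : {set T}) : bool :=
  maxset (fun S : {set T} => conn_in S && no_cut_in S) B.

Definition is_clique (B : {set T}) : bool :=
  [forall x in B, forall y in B, (x != y) ==> e x y].

Definition block_graph : Prop := forall B : {set T}, is_block B -> is_clique B.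

Definition cut_vertex (v : T) : bool :=
  [exists x, exists y, [&& x != v, y != v &
     ~~ connect [rel a b | e a b && (a != v) && (b != v)] x y]].

(* a subgraph is a pair (W, F): vertex set W, edge set F of 2-element sets *)
Definition subgraph := ({set T} * {set {set T}})%type.

Definition conn_subgraph (p : subgraph) : bool :=
  [forall f in p.2, exists x in p.1, exists y in p.1, e x y && (f == [set x; y])]
  && [forall x in p.1, forall y in p.1,
        connect (fun a b => [set a; b] \in p.2) x y].

Definition conn_sub (A : {set T}) : {set subgraph} :=
  [set p : subgraph | conn_subgraph p && (A \subset p.1)].

(* Steiner distance: min number of edges of a connected subgraph containing A;
   the default #|{set T}| bounds every #|F|, so it never affects the minimum
   when conn_sub A is nonempty *)
Definition steiner_dist (A : {set T}) : nat :=
  \big[minn/#|[set: {set T}]|]_(p in conn_sub A) #|p.2|.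

Definition steiner_trees (A : {set T}) : {set subgraph} :=
  [set p in conn_sub A | #|p.2| == steiner_dist A].

Definition sigma (A : {set T}) : nat := #|steiner_trees A|.

Definition sigma_v (A : {set T}) (v : T) : nat :=
  #|[set p in steiner_trees A | (v \in p.1) && (v \notin A)]|.

Definition SW (k : nat) : nat :=
  \sum_(A : {set T} | #|A| == k) steiner_dist A.

Definition betweenness (k : nat) (v : T) : rat :=
  \sum_(A : {set T} | (v \notin A) && (#|A| == k))
     ((sigma_v A v)%:R / (sigma A)%:R)%R.

End BlockGraphs.

From mathcomp Require Import all_boot all_order all_algebra zify.
Set Implicit Arguments. Unset Strict Implicit. Unset Printing Implicit Defensive.
Import Order.TTheory.

(* In a block graph every vertex on a shortest x-y path separates x from y:
   if its two path neighbours were joined by a detour avoiding it, they would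
   lie on a common cycle, hence in a common block, hence be adjacent, and the
   path could be shortened.  Since a separating vertex of two terminals lies
   on every connected subgraph containing them, the Steiner trees of a
   terminal set A all have the same vertex set: the hull of A, made of A and
   of all vertices separating two terminals.  Hence d(A) = |hull A| - 1, and
   each vertex v of hull A \ A, necessarily a cut vertex, is an inner vertex
   of every Steiner tree of A, so B_k(v) counts the k-sets A with v in
   hull A \ A.  Summing over v gives the sum over A of d(A) - (k - 1). *)

Definition induced (T : finType) (e : rel T) (S : {set T}) :=
  [rel a b | e a b && (a \in S) && (b \in S)].

Lemma induced_sym (T : finType) (e : rel T) (S : {set T}) :
  symmetric e -> symmetric (induced e S).
Proof. by move=> e_sym a b /=; rewrite e_sym andbAC -andbA andbCA andbA. Qed.

Lemma path_induced (T : finType) (e : rel T) (S : {set T}) x s :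
  path e x s -> {subset x :: s <= S} -> path (induced e S) x s.
Proof.
move=> pxs /allP sS; apply: sub_in_path sS pxs.
by move=> a b aS bS /= ->; rewrite aS bS.
Qed.

Section Paths.
Variables (T : finType) (r : rel T).

Lemma connect_path_sym x s :
  symmetric r -> path r x s -> {in x :: s &, forall a b, connect r a b}.
Proof.
move=> r_sym pxs a b a_s b_s; apply: (connect_trans (y := x)).
  by rewrite sym_connect_sym //; apply: path_connect pxs _ a_s.
exact: path_connect pxs _ b_s.
Qed.

Lemma exists_shortest_path x y : connect r x y ->
  exists p, [/\ path r x p, last x p = y, uniq (x :: p) &
    forall s, path r x s -> last x s = y -> size p <= size s].
Proof.
move=> /connectP cxy.
pose has_path n := [exists t : n.-tuple T, path r x t && (last x t == y)].
have has_path_size s : path r x s -> last x s = y -> has_path (size s).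
  by move=> pxs lxs; apply/existsP; exists (in_tuple s); rewrite /= pxs lxs eqxx.
have [|n /existsP[t /andP[pxt /eqP lxt]] n_min] := ex_minnP (P := has_path).
  by case: cxy => s pxs lxs; exists (size s); apply: has_path_size.
case: (shortenP pxt) lxt => p pxp uxp sub_p lxp.
exists p; split=> // s pxs lxs.
apply: leq_trans (n_min _ (has_path_size s pxs lxs)).
by rewrite -(size_tuple t) uniq_leq_size //; case/andP: uxp.
Qed.

Fixpoint reach_within (root : T) (n : nat) : {set T} :=
  if n is n'.+1 then
    reach_within root n' :|: [set y | [exists x in reach_within root n', r x y]]
  else [set root].

Lemma last_path_reach_within root s :
  path r root s -> last root s \in reach_within root (size s).
Proof.
elim/last_ind: s => [|s y IHs]; first by rewrite /= set11.
rewrite rcons_path last_rcons size_rcons => /andP[/IHs s_reach ry] /=.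
by apply/setUP; right; rewrite inE; apply/existsP; exists (last root s); rewrite s_reach.
Qed.

Lemma reach_within_connect root n x : x \in reach_within root n -> connect r root x.
Proof.
elim: n x => [|n IHn] x /=; first by rewrite inE => /eqP ->.
case/setUP => [/IHn //|]; rewrite inE => /existsP[y /andP[/IHn ry yx]].
exact: connect_trans ry (connect1 yx).
Qed.

Lemma exists_bfs_parent root : exists par : T -> T, exists h : T -> nat,
  forall w, connect r root w -> w != root ->
    [/\ r (par w) w, connect r root (par w) & h (par w) < h w].
Proof.
have reachable w : exists n, (w \in reach_within root n) || ~~ connect r root w.
  case: (boolP (connect r root w)) => [/connectP[s ps ->]|_]; last first.
    by exists 0; rewrite orbT.
  by exists (size s); rewrite last_path_reach_within.
pose h w := ex_minn (reachable w).
have h_min w n : w \in reach_within root n -> h w <= n.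
  by move=> wn; rewrite /h; case: ex_minnP => m _; apply; rewrite wn.
have h_reach w : connect r root w -> w \in reach_within root (h w).
  by move=> cw; rewrite /h; case: ex_minnP => m; rewrite cw orbF.
pose par w := odflt w [pick x in reach_within root (h w).-1 | r x w].
exists par, h => w cw w_root; rewrite /par.
move: (h_reach w cw); case hw: (h w) => [|n] /=; first by rewrite inE (negbTE w_root).
case/setUP => [/h_min|]; first by rewrite hw ltnn.
rewrite inE => /existsP[x /andP[xn xw]].
case: pickP => [y /andP[yn yw]|/(_ x)]; last by rewrite xn xw.
by split; [|apply: reach_within_connect yn|apply: h_min].
Qed.

End Paths.

Section SpanningEdges.
Variable T : finType.

Lemma card_le_edges_succ (W : {set T}) (F : {set {set T}}) root :
  root \in W -> {in W, forall w, connect (fun a b => [set a; b] \in F) root w} ->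
  #|W| <= #|F|.+1.
Proof.
move=> rootW conW.
have [par [h par_spec]] := exists_bfs_parent (fun a b => [set a; b] \in F) root.
rewrite (cardsD1 root W) rootW add1n ltnS.
have par_inj : {in W :\ root &, injective (fun w => [set w; par w])}.
  move=> w1 w2 /setD1P[w1_root /conW c1] /setD1P[w2_root /conW c2] eq12.
  have [_ _ h1] := par_spec _ c1 w1_root; have [_ _ h2] := par_spec _ c2 w2_root.
  have /set2P[//|E1] : w1 \in [set w2; par w2] by rewrite -eq12 set21.
  have /set2P[//|E2] : w2 \in [set w1; par w1] by rewrite eq12 set21.
  by move: h1 h2; rewrite -E1 -E2 => /ltn_trans h12 /h12; rewrite ltnn.
rewrite -(card_in_imset par_inj); apply: subset_leq_card.
apply/subsetP => _ /imsetP[w /setD1P[w_root /conW cw] ->].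
by have [] := par_spec _ cw w_root; rewrite setUC.
Qed.

Lemma exists_spanning_edges (e : rel T) (W : {set T}) root :
  root \in W -> {in W, forall w, connect (induced e W) root w} ->
  exists2 F, conn_subgraph e (W, F) & #|F| < #|W|.
Proof.
move=> rootW conW.
have [par [h par_spec]] := exists_bfs_parent (induced e W) root.
pose F := [set [set w; par w] | w in W :\ root].
exists F; last first.
  by apply: leq_ltn_trans (leq_imset_card _ _) _; rewrite (cardsD1 root W) rootW.
have F_sym : symmetric (fun a b => [set a; b] \in F) by move=> a b; rewrite setUC.
have to_root n w : h w <= n -> connect (induced e W) root w ->
    connect (fun a b => [set a; b] \in F) w root.
  elim: n w => [|n IHn] w hw cw; have [->|w_root] := eqVneq w root; rewrite ?connect0 //.
    by have [_ _] := par_spec _ cw w_root; rewrite ltnNge (leq_trans hw).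
  have [/= /andP[/andP[_ _] Ww] c_par h_par] := par_spec _ cw w_root.
  apply: connect_trans (connect1 _) (IHn _ _ c_par); first by apply: imset_f; rewrite !inE w_root.
  by rewrite -ltnS (leq_trans h_par).
apply/andP; split.
  apply/forallP => f; apply/implyP => /imsetP[w /setD1P[w_root /conW cw] ->].
  have [/= /andP[/andP[e_par par_W] w_W] _ _] := par_spec _ cw w_root.
  apply/existsP; exists (par w); rewrite par_W /=; apply/existsP; exists w.
  by rewrite w_W e_par setUC eqxx.
apply/forallP => x; apply/implyP => /conW cx; apply/forallP => y; apply/implyP => /conW cy.
apply: connect_trans (to_root _ _ (leqnn _) cx) _.
by rewrite sym_connect_sym //; apply: to_root (leqnn _) cy.
Qed.

End SpanningEdges.

Section BlockGraph.
Variables (T : finType) (e : rel T).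

Definition avoid (z : T) := [rel a b | e a b && (a != z) && (b != z)].

Definition separates (z x y : T) := [&& x != z, y != z & ~~ connect (avoid z) x y].

Definition steiner_hull (A : {set T}) :=
  [set z | (z \in A) || [exists x in A, exists y in A, separates z x y]].

Lemma subset_hull (A : {set T}) : A \subset steiner_hull A.
Proof. by apply/subsetP => z zA; rewrite inE zA. Qed.

Lemma hull_cut_vertex (A : {set T}) v : v \in steiner_hull A :\: A -> cut_vertex e v.
Proof.
rewrite !inE => /andP[/negbTE -> /= /exists_inP[x _ /exists_inP[y _ v_sep]]].
by apply/existsP; exists x; apply/existsP; exists y.
Qed.

Lemma path_avoid z x s : path e x s -> z \notin x :: s -> path (avoid z) x s.
Proof.
move=> pxs z_xs; apply: (sub_in_path (P := predC1 z)) _ _ pxs.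
  by move=> a b; rewrite !inE => az bz eab; rewrite /= eab az bz.
by apply/allP => u u_xs; rewrite inE; apply: contraNneq z_xs => <-.
Qed.

Lemma path_avoid_notin z x s : x != z -> path (avoid z) x s -> z \notin x :: s.
Proof.
elim: s x => [|y s IHs] x xz /=; first by rewrite inE eq_sym.
case/andP=> /andP[_ yz] pys; rewrite in_cons negb_or eq_sym xz.
exact: IHs.
Qed.

Lemma separates_mem_path z x y p :
  separates z x y -> path e x p -> last x p = y -> z \in x :: p.
Proof.
case/and3P=> _ _ /negP xy_sep pxp lxp; apply/negPn/negP => z_p.
by apply: xy_sep; rewrite -lxp; apply: path_connect (path_avoid pxp z_p) _ (mem_last _ _).
Qed.

Hypothesis e_simple : simple_graph e.
Let e_sym : symmetric e := proj1 e_simple.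
Let e_irr : irreflexive e := proj2 e_simple.

Lemma avoid_sym z : symmetric (avoid z).
Proof. by move=> a b /=; rewrite e_sym andbAC. Qed.

Lemma path_conn_in b s : path e b s -> conn_in e [set u in b :: s].
Proof.
move=> pbs; apply/forall_inP => x; rewrite in_set => xs.
apply/forall_inP => y; rewrite in_set => ys.
have sub_s : {subset b :: s <= [set u in b :: s]} by move=> u; rewrite in_set.
exact (connect_path_sym (induced_sym _ e_sym) (path_induced pbs sub_s) xs ys).
Qed.

Lemma cycle_conn_no_cut u s : uniq (u :: s) -> cycle e (u :: s) ->
  conn_in e [set x in u :: s] && no_cut_in e [set x in u :: s].
Proof.
move=> us cs; apply/andP; split.
  have -> : [set x in u :: s] = [set x in u :: rcons s u].
    by apply/setP => x; rewrite !inE mem_rcons in_cons orbA orbb.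
  exact: path_conn_in.
apply/forall_inP => v; rewrite inE => vs.
have [i s' rot_v] := rot_to vs.
have /andP[v_s' _] : uniq (v :: s') by rewrite -rot_v rot_uniq.
have cs' : cycle e (v :: s') by rewrite -rot_v rot_cycle.
have -> : [set x in u :: s] :\ v = [set x in s'].
  apply/setP => x; rewrite in_setD1 !in_set -(mem_rot i) rot_v in_cons.
  by have [->|] := eqVneq x v; rewrite ?(negbTE v_s').
case: s' {rot_v v_s'} cs' => [|b s'] cs'; first by apply/forall_inP => x; rewrite inE.
by move: cs'; rewrite /= rcons_path => /andP[_ /andP[pbs _]]; apply: path_conn_in.
Qed.

Hypothesis e_block : block_graph e.

Lemma block_chord a z c : e a z -> e z c -> a != c -> connect (avoid z) a c -> e a c.
Proof.
move=> eaz ezc ac /connectP[q0 pq0 lq0].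
case: (shortenP pq0) lq0 => q pq uq _ lq.
have az : a != z by apply: contraTneq eaz => ->; rewrite e_irr.
have z_q := path_avoid_notin az pq.
have pq_e : path e a q by apply: sub_path pq => ? ? /andP[/andP[]].
have cyc : cycle e (z :: a :: q).
  by rewrite /= rcons_path (e_sym z a) eaz pq_e -lq (e_sym c z) ezc.
have uzq : uniq (z :: a :: q) by rewrite /= z_q.
have [B /e_block /forall_inP B_clique cycB] :=
  maxset_exists (P := fun S => conn_in e S && no_cut_in e S) (cycle_conn_no_cut uzq cyc).
have aB : a \in B by rewrite (subsetP cycB) // !inE eqxx orbT.
have cB : c \in B by rewrite (subsetP cycB) // inE lq in_cons mem_last orbT.
by have /forall_inP/(_ c cB)/implyP := B_clique a aB; apply.
Qed.

Hypothesis e_conn : graph_connected e.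

Lemma exists_separated_path x y : exists p,
  [/\ path e x p, last x p = y & {in p, forall z, z != y -> separates z x y}].
Proof.
have [p [pxp lxp uxp p_min]] := exists_shortest_path (e_conn x y).
exists p; split=> // z z_p zy; move: pxp lxp uxp p_min.
case/splitPr: z_p => p1 [|c p2]; first by rewrite last_cat => _ /= yz; rewrite yz eqxx in zy.
set a := last x p1.
rewrite cat_path last_cat -cat_cons cat_uniq => /= /andP[p1_e /and3P[eaz ezc p2_e]] lxp.
case/and3P=> _ /norP[z_p1 /norP[c_p1 _]] /andP[z_p2 _] p_min.
have ac : a != c by apply: contraNneq c_p1 => <-; apply: mem_last.
have not_eac : ~~ e a c.
  apply/negP => eac; have := p_min (p1 ++ c :: p2).
  rewrite cat_path /= p1_e eac p2_e last_cat /= => /(_ isT lxp).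
  by rewrite !size_cat /= addnS ltnn.
have not_ac : ~~ connect (avoid z) a c by apply: contra not_eac; apply: block_chord.
apply/and3P; split.
- by apply: contraNneq z_p1 => <-; rewrite inE eqxx.
- by rewrite eq_sym.
apply: contra not_ac => xy.
have sym_z := sym_connect_sym (avoid_sym z).
have ax : connect (avoid z) a x.
  by rewrite sym_z; apply: path_connect (path_avoid p1_e z_p1) _ (mem_last _ _).
have yc : connect (avoid z) y c.
  by rewrite sym_z -lxp; apply: path_connect (path_avoid p2_e z_p2) _ (mem_last _ _).
exact: connect_trans (connect_trans ax xy) yc.
Qed.

Lemma hull_path (A : {set T}) x y : x \in A -> y \in A ->
  exists2 p, path (induced e (steiner_hull A)) x p & last x p = y.
Proof.
move=> xA yA; have [p [pxp lxp p_sep]] := exists_separated_path x y.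
exists p => //; apply: path_induced pxp _ => z; rewrite in_cons inE.
case/orP=> [/eqP ->|z_p]; first by rewrite xA.
have [->|zy] := eqVneq z y; first by rewrite yA.
apply/orP; right; apply/exists_inP; exists x => //; apply/exists_inP; exists y => //.
exact: p_sep.
Qed.

Lemma hull_connected (A : {set T}) x0 : x0 \in A ->
  {in steiner_hull A, forall u, connect (induced e (steiner_hull A)) x0 u}.
Proof.
move=> x0A; have conn_A u : u \in A -> connect (induced e (steiner_hull A)) x0 u.
  by move=> uA; have [p pp <-] := hull_path x0A uA; apply: path_connect pp _ (mem_last _ _).
move=> u; rewrite inE => /orP[/conn_A //|/exists_inP[x xA /exists_inP[y yA u_sep]]].
have [p pp lp] := hull_path xA yA.
have pp_e : path e x p by apply: sub_path pp => ? ? /andP[/andP[]].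
exact: connect_trans (conn_A x xA) (path_connect pp (separates_mem_path u_sep pp_e lp)).
Qed.

Lemma conn_subgraph_edge p a b : conn_subgraph e p -> [set a; b] \in p.2 ->
  [/\ a \in p.1, b \in p.1 & e a b].
Proof.
case/andP=> /forall_inP p_edges _ /p_edges.
case/exists_inP=> u uW /exists_inP[v vW /andP[euv /eqP ab_uv]].
have uv : u != v by apply: contraTneq euv => ->; rewrite e_irr.
have in_W w : w \in [set a; b] -> w \in p.1 by rewrite ab_uv => /set2P[]->.
split; [exact/in_W/set21 | exact/in_W/set22 |].
have /set2P[au|av] : a \in [set u; v] by rewrite -ab_uv set21.
  have /set2P[va|vb] : v \in [set a; b] by rewrite ab_uv set22.
    by move: uv; rewrite va au eqxx.
  by rewrite au -vb.
have /set2P[ua|ub] : u \in [set a; b] by rewrite ab_uv set21.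
  by move: uv; rewrite ua av eqxx.
by rewrite av -ub e_sym.
Qed.

Lemma hull_subset_vertices (A : {set T}) p : p \in conn_sub e A -> steiner_hull A \subset p.1.
Proof.
rewrite inE => /andP[p_conn AW]; apply/subsetP => z; rewrite inE.
case/orP=> [/(subsetP AW) //|/exists_inP[x xA /exists_inP[y yA /and3P[_ _]]]].
apply: contraR => zW; have /andP[_ /forall_inP p_conn_W] := p_conn.
have /forall_inP/(_ y (subsetP AW _ yA)) := p_conn_W x (subsetP AW _ xA).
apply: connect_sub => a b ab; apply: connect1.
have [aW bW eab] := conn_subgraph_edge p_conn ab.
have az : a != z by apply: contraNneq zW => <-.
have bz : b != z by apply: contraNneq zW => <-.
by rewrite /= eab az bz.
Qed.

Lemma conn_sub_card_vertices (A : {set T}) p x0 : x0 \in A -> p \in conn_sub e A -> #|p.1| <= #|p.2|.+1.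
Proof.
move=> x0A; rewrite inE => /andP[/andP[_ /forall_inP p_conn] AW].
have x0W := subsetP AW _ x0A.
by apply: (card_le_edges_succ x0W) => w wW; have /forall_inP := p_conn x0 x0W; apply.
Qed.

Lemma exists_hull_tree (A : {set T}) x0 : x0 \in A ->
  exists2 F, (steiner_hull A, F) \in conn_sub e A & #|F|.+1 = #|steiner_hull A|.
Proof.
move=> x0A; have x0H : x0 \in steiner_hull A by rewrite inE x0A.
have [F F_conn F_lt] := exists_spanning_edges x0H (hull_connected x0A).
have F_sub : (steiner_hull A, F) \in conn_sub e A by rewrite inE F_conn subset_hull.
by exists F => //; apply/eqP; rewrite eqn_leq F_lt (conn_sub_card_vertices x0A F_sub).
Qed.

Lemma steiner_dist_hull (A : {set T}) x0 : x0 \in A ->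
  (steiner_dist e A).+1 = #|steiner_hull A|.
Proof.
move=> x0A; have [F F_sub F_card] := exists_hull_tree x0A.
apply/eqP; rewrite eqn_leq -{1}F_card ltnS; apply/andP; split.
  exact: (bigmin_le_cond _ (fun p : subgraph T => #|p.2|) F_sub).
apply: (big_ind (fun m => #|steiner_hull A| <= m.+1)) => [|m1 m2 le1 le2|p p_sub].
- rewrite cardsT ltnW // ltnS; apply: leq_trans (max_card _) _.
  exact: @leq_card _ _ (@set1 T) set1_inj.
- by rewrite /minn; case: ltnP.
- exact: leq_trans (subset_leq_card (hull_subset_vertices p_sub)) (conn_sub_card_vertices x0A p_sub).
Qed.

Lemma steiner_tree_vertices (A : {set T}) x0 p : x0 \in A ->
  p \in steiner_trees e A -> p.1 = steiner_hull A.
Proof.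
move=> x0A; rewrite inE => /andP[p_sub /eqP p_card].
apply/eqP; rewrite eq_sym eqEcard hull_subset_vertices //=.
by rewrite -(steiner_dist_hull x0A) -p_card (conn_sub_card_vertices x0A p_sub).
Qed.

Lemma sigma_gt0 (A : {set T}) x0 : x0 \in A -> 0 < sigma e A.
Proof.
move=> x0A; have [F F_sub F_card] := exists_hull_tree x0A.
apply/card_gt0P; exists (steiner_hull A, F).
by rewrite inE F_sub -eqSS (steiner_dist_hull x0A) F_card /=.
Qed.

Lemma sigma_v_hull (A : {set T}) x0 v : x0 \in A -> v \notin A ->
  sigma_v e A v = if v \in steiner_hull A then sigma e A else 0.
Proof.
move=> x0A vA; rewrite /sigma_v /sigma; case: ifP => vH; [apply: eq_card | apply: eq_card0];
  move=> p; rewrite in_set vA andbT;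
  by case: (boolP (p \in steiner_trees e A)) => //= /(steiner_tree_vertices x0A) ->.
Qed.

Lemma betweenness_count k v : 0 < k ->
  betweenness e k v = ((\sum_(A : {set T} | #|A| == k) (v \in steiner_hull A :\: A : nat))%:R)%R.
Proof.
move=> k_gt0; rewrite /betweenness GRing.natr_sum big_mkcond [in RHS]big_mkcond /=.
apply: eq_bigr => A _; case: (eqVneq #|A| k) => [Ak|]; last by rewrite andbF.
have /card_gt0P[x0 x0A] : 0 < #|A| by rewrite Ak.
rewrite andbT in_setD; case: (boolP (v \in A)) => //= vA.
rewrite (sigma_v_hull x0A vA); case: (v \in steiner_hull A) => /=; last by rewrite GRing.mul0r.
by rewrite GRing.divff // Num.Theory.pnatr_eq0 -lt0n (sigma_gt0 x0A).
Qed.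

End BlockGraph.

Lemma sum_cut_vertices_hull (T : finType) (e : rel T) (A : {set T}) :
  \sum_(v | cut_vertex e v) (v \in steiner_hull e A :\: A : nat) = #|steiner_hull e A :\: A|.
Proof.
rewrite -sum1_card big_mkcond [in RHS]big_mkcond /=; apply: eq_bigr => v _.
by case: (boolP (v \in _ :\: A)) => [/hull_cut_vertex ->|]; case: (cut_vertex e v).
Qed.

Theorem mainTheorem5 (T : finType) (e : rel T) (k : nat) :
  simple_graph e -> graph_connected e -> block_graph e ->
  2 <= k <= #|T| ->
  ((SW e k)%:R : rat) =
    (\sum_(v : T | cut_vertex e v) betweenness e k v +
     ((k - 1) * 'C(#|T|, k))%:R)%R.
Proof.
move=> e_simple e_conn e_block /andP[k_ge2 _].
have k_gt0 : 0 < k by apply: leq_trans k_ge2.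
rewrite (eq_bigr _ (fun v _ => betweenness_count e_simple e_block e_conn v k_gt0)).
rewrite -GRing.natr_sum -GRing.natrD; congr (GRing.natmul _ _).
rewrite exchange_big /= (eq_bigr _ (fun A _ => sum_cut_vertices_hull e A)).
rewrite -card_draws mulnC -sum_nat_const.
rewrite [X in _ + X](eq_bigl (fun A : {set T} => #|A| == k)) => [|A]; last by rewrite inE.
rewrite -big_split /=; apply: eq_bigr => A /eqP Ak.
have /card_gt0P[x0 x0A] : 0 < #|A| by rewrite Ak.
have A_sub := subset_hull e A.
have := steiner_dist_hull e_simple e_block e_conn x0A; rewrite cardsD (setIidPr A_sub).
have := subset_leq_card A_sub; lia.
Qed.
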